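(* Consider C-VFL (described in the context) and suppose Assumptions (A4)–(A5) of the context hold. Let $t$ be any iteration, $t_0$ the most recent communication iteration $\le t$, and $m\in\{0,\dots,M\}$. Let $\hat\Phi_m^t$ be party $m$'s view with compressed embeddings and $\Phi_m^t$ the corresponding view with uncompressed embeddings. Then $$\mathbb{E}\big\|\nabla_mF_{\mathcal B}(\hat\Phi_m^t)-\nabla_mF_{\mathcal B}(\Phi_m^t)\big\|^2\le H_m^2G_m^2\sum_{j=0,\,j\ne m}^M\mathcal{E}_j^{t_0}.$$
   Context: Setting. There are $M$ parties indexed $1,\dots,M$ and a server indexed $0$. Data samples $x^i=[x_1^i,\dots,x_M^i]$ with labels $y^i$ are vertically partitioned, party $m$ holding features $x_m^i$. Party $m\ge1$ has parameters $\theta_m$ and embedding function $h_m(\theta_m;x_m)\in\mathbb{R}^{P_m}$; the server has $\theta_0\in\mathbb{R}^{P_0}$ and $h_0(\theta_0;x):=\theta_0$. For a loss $l$ and a mini-batch $\mathcal B$ of $B$ samples, $F_{\mathcal B}(\Theta)=\frac1B\sum_{i\in\mathcal B}l(\theta_0,h_1(\theta_1;x_1^i),\dots,h_M(\theta_M;x_M^i);y^i)$. $h_m(\theta_m;X_m^{\mathcal B})$ denotes the $P_m\times B$ matrix of embeddings of the samples in $\mathcal B$. For a collection $\Phi$ of embeddings of parties $j\ne m$, $\nabla_mF_{\mathcal B}(\Phi)$ is the gradient in $\theta_m$ of the mini-batch loss in which party $m$'s embedding is $h_m(\theta_m;X_m^{\mathcal B})$ and the other embeddings are fixed to those of $\Phi$.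 Assumptions. (A4) There are $H_m>0$ with $\|\nabla^2_{h_m(\theta_m;X_m^{\mathcal B})}F_{\mathcal B}(\Theta)\|_{\mathcal F}\le H_m$ for all $\Theta$ and all mini-batches $\mathcal B$. (A5) There are $G_m>0$ with $\|\nabla_{\theta_m}h_m(\theta_m;X_m^{\mathcal B})\|_{\mathcal F}\le G_m$ for all $\theta_m$ and all $\mathcal B$. Algorithm C-VFL. Compressors $\mathcal C_m:\mathbb{R}^{P_m}\to\mathbb{R}^{P_m}$; $Q$ local iterations per round. At each communication iteration $t$ ($t\bmod Q=0$) a mini-batch $\mathcal B^t$ is sampled and $\hat\Phi^{t}=\{\mathcal C_0(\theta_0^t),\mathcal C_1(h_1(\theta_1^t;X_1^{\mathcal B^t})),\dots,\mathcal C_M(h_M(\theta_M^t;X_M^{\mathcal B^t}))\}$ is sent to all parties. With $t_0$ the most recent communication iteration $\le t$, $\hat\Phi_m^t$ is $\hat\Phi^{t_0}$ with its $m$-th entry replaced by $h_m(\theta_m^t;X_m^{\mathcal B^{t_0}})$, and each party updates $\theta_m^{t+1}=\theta_m^t-\eta^{t_0}\nabla_mF_{\mathcal B}(\hat\Phi_m^t;y^{\mathcal B^{t_0}})$. $\Phi_m^t$ is defined like $\hat\Phi_m^t$ but with the uncompressed entries $\theta_0^{t_0}$ and $h_j(\theta_j^{t_0};X_j^{\mathcal B^{t_0}})$ for $j\ne m$. All gradients here use the mini-batch $\mathcal B^{t_0}$ and party $m$'s current parameters $\theta_m^t$. Compression error. $\epsilon_j^{t_0}:=\mathcal C_j(h_j(\theta_j^{t_0};X_j^{\mathcal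 B^{t_0}}))-h_j(\theta_j^{t_0};X_j^{\mathcal B^{t_0}})$ ($P_j\times B$ matrix), $\mathcal{E}_j^{t_0}:=\mathbb{E}\|\epsilon_j^{t_0}\|_{\mathcal F}^2$. *)

From HB Require Import structures.
From mathcomp Require Import all_boot all_order all_algebra.
From mathcomp Require Import all_classical all_reals all_analysis.
Set Implicit Arguments. Unset Strict Implicit. Unset Printing Implicit Defensive.
Import Order.TTheory GRing.Theory Num.Theory.
Import numFieldNormedType.Exports.
Local Open Scope ring_scope.

(* ===== C-VFL setting.  Parties (incl. the server 0) are indexed by 'I_M.+1. ===== *)

(** Parameter dimension of party j: the server's parameter theta_0 lives in R^{P_0}. *)
Definition pdim (M : nat) (P D : 'I_M.+1 -> nat) (j : 'I_M.+1) : nat :=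
  if j == ord0 then P ord0 else D j.

Definition sqfrob (R : realType) m n (A : 'M[R]_(m, n)) : R :=
  \sum_(a < m) \sum_(i < n) A a i ^+ 2.

(** Batch embedding matrix h_j(theta_j; X_j^B) : P_j x B. *)
Definition batchEmb (R : realType) (M B : nat) (X : 'I_M.+1 -> Type)
    (Pj dj : nat) (j : 'I_M.+1) (hj : 'rV[R]_dj -> X j -> 'cV[R]_Pj)
    (theta : 'rV[R]_dj) (xs : 'I_B -> forall k, X k) : 'M[R]_(Pj, B) :=
  \matrix_(a < Pj, i < B) hj theta (xs i j) a 0.

Definition compress (R : realType) (Pj B : nat) (C : 'cV[R]_Pj -> 'cV[R]_Pj)
    (E : 'M[R]_(Pj, B)) : 'M[R]_(Pj, B) :=
  \matrix_(a < Pj, i < B) C (col i E) a 0.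

Definition stack (R : realType) (M B : nat) (P : 'I_M.+1 -> nat)
    (E : forall j : 'I_M.+1, 'M[R]_(P j, B)) : 'M[R]_(\sum_(j < M.+1) P j, B) :=
  mxcol E.

Definition FB (R : realType) (Ptot B : nat) (Y : Type) (l : 'cV[R]_Ptot -> Y -> R)
    (ys : 'I_B -> Y) (Phi : 'M[R]_(Ptot, B)) : R :=
  B%:R^-1 * \sum_(i < B) l (col i Phi) (ys i).

Definition edir (R : realType) (M B : nat) (P : 'I_M.+1 -> nat) (j : 'I_M.+1)
    (a : 'I_(P j)) (i : 'I_B) : 'M[R]_(\sum_(k < M.+1) P k, B) :=
  stack (dfwith (fun k : 'I_M.+1 => (0 : 'M[R]_(P k, B))) j (delta_mx a i : 'M[R]_(P j, B))).

(** Squared Frobenius norm of the (row block m of the) Hessian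
    nabla^2_{h_m} F_B at Phi: second derivatives d/d(entry of h_m) d/d(any embedding entry). *)
Definition hess_sqfrob (R : realType) (M B : nat) (P : 'I_M.+1 -> nat)
    (F : 'M[R]_(\sum_(k < M.+1) P k, B) -> R) (m : 'I_M.+1)
    (Phi : 'M[R]_(\sum_(k < M.+1) P k, B)) : R :=
  \sum_(a < P m) \sum_(i < B) \sum_(j < M.+1) \sum_(b < P j) \sum_(k < B)
    (derive (fun Psi => derive F Psi (@edir R M B P m a i)) Phi (@edir R M B P j b k)) ^+ 2.

Definition jac_sqfrob (R : realType) (d p n : nat) (g : 'rV[R]_d -> 'M[R]_(p, n))
    (theta : 'rV[R]_d) : R :=
  \sum_(c < d) sqfrob (derive g theta (delta_mx 0 c)).

Definition grad (R : realType) (d : nat) (f : 'rV[R]_d -> R) (theta : 'rV[R]_d) : 'rV[R]_d :=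
  \row_(c < d) derive f theta (delta_mx 0 c).

(** nabla_m F_B(Phi): gradient in theta_m of the mini-batch loss in which party m's
    embedding is h_m(theta_m; X_m^B) and the other embeddings are fixed to those of Phi. *)
Definition gradm (R : realType) (M B : nat) (X : 'I_M.+1 -> Type) (Y : Type)
    (P D : 'I_M.+1 -> nat)
    (h : forall j, 'rV[R]_(pdim P D j) -> X j -> 'cV[R]_(P j))
    (l : 'cV[R]_(\sum_(j < M.+1) P j) -> Y -> R) (m : 'I_M.+1)
    (xs : 'I_B -> forall k, X k) (ys : 'I_B -> Y)
    (Phi : forall j : 'I_M.+1, 'M[R]_(P j, B)) (theta : 'rV[R]_(pdim P D m))
    : 'rV[R]_(pdim P D m) :=
  grad (fun th => FB l ys (stack (dfwith Phi m (@batchEmb R M B X (P m) (pdim P D m) m (h m) th xs))))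
    theta.

Definition embU (R : realType) (M B N : nat) (d : measure_display) (Omega : measurableType d)
    (X : 'I_M.+1 -> Type) (P D : 'I_M.+1 -> nat)
    (h : forall j, 'rV[R]_(pdim P D j) -> X j -> 'cV[R]_(P j))
    (xdat : 'I_N -> forall k, X k) (bat : nat -> Omega -> 'I_B -> 'I_N)
    (theta : forall j, nat -> Omega -> 'rV[R]_(pdim P D j)) (t0 : nat) (w : Omega)
    : forall j : 'I_M.+1, 'M[R]_(P j, B) :=
  fun j => @batchEmb R M B X (P j) (pdim P D j) j (h j) (theta j t0 w)
             (fun i => xdat (bat t0 w i)).

Definition embC (R : realType) (M B N : nat) (d : measure_display) (Omega : measurableType d)
    (X : 'I_M.+1 -> Type) (P D : 'I_M.+1 -> nat)
    (h : forall j, 'rV[R]_(pdim P D j) -> X j -> 'cV[R]_(P j))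
    (xdat : 'I_N -> forall k, X k) (bat : nat -> Omega -> 'I_B -> 'I_N)
    (C : forall j : 'I_M.+1, nat -> Omega -> 'cV[R]_(P j) -> 'cV[R]_(P j))
    (theta : forall j, nat -> Omega -> 'rV[R]_(pdim P D j)) (t0 : nat) (w : Omega)
    : forall j : 'I_M.+1, 'M[R]_(P j, B) :=
  fun j => compress (C j t0 w) (embU h xdat bat theta t0 w j).

Arguments gradm {R M B X Y P D} h l m xs ys Phi theta.

(* Party m's two views agree in block m (its own embedding
   h_m(theta_m)) and differ in every other block j by the compression error
   eps_j.  By the chain rule, nabla_m F_B = J^T g, where J is the Jacobian of
   theta |-> h_m(theta; X_m) and g(Psi) is the block of nabla F_B belonging to
   party m's embedding; Cauchy-Schwarz gives
   |nabla_m F_B(hat Phi) - nabla_m F_B(Phi)|^2 <= |J|^2 |g(hat Psi) - g(Psi)|^2.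
   The mean value theorem applied to <g(hat Psi) - g(Psi), g(.)> on the segment
   [Psi, hat Psi], followed by Cauchy-Schwarz against the Hessian, bounds
   |g(hat Psi) - g(Psi)|^2 by H_m^2 |hat Psi - Psi|^2 = H_m^2 sum_(j <> m) |eps_j|^2.
   Integrating this pointwise bound gives the claim; the left-hand integrand
   need not be measurable, which is harmless for nonnegative integrands.  The
   bound holds for arbitrary parameters theta. *)

From HB Require Import structures.
From mathcomp Require Import all_boot all_order all_algebra.
From mathcomp Require Import all_classical all_reals all_analysis.
From mathcomp Require Import measurable_realfun.
From mathcomp Require Import ring.
Import Order.TTheory GRing.Theory Num.Theory.
Import numFieldNormedType.Exports.
Set Implicit Arguments. Unset Strict Implicit. Unset Printing Implicit Defensive.
Local Open Scope ring_scope.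

Section SumsOfSquares.
Variable R : realType.

Lemma sum_mul_sqr_le (I : finType) (x y : I -> R) :
  (\sum_i x i * y i) ^+ 2 <= (\sum_i x i ^+ 2) * (\sum_i y i ^+ 2).
Proof.
set X := \sum_i x i ^+ 2; set Y := \sum_i y i ^+ 2; set Z := \sum_i x i * y i.
have Y0 : 0 <= Y by apply: sumr_ge0 => i _; exact: sqr_ge0.
have [Y_eq0 | Y_neq0] := eqVneq Y 0.
  have y0 i : y i = 0.
    apply/eqP; rewrite -sqrf_eq0; move/eqP: Y_eq0.
    rewrite psumr_eq0 => [/allP/(_ i (mem_index_enum i))/implyP/(_ isT)//|j _].
    exact: sqr_ge0.
  have -> : Z = 0 by rewrite /Z big1 // => i _; rewrite y0 mulr0.
  by rewrite expr0n mulr_ge0 // sumr_ge0 // => i _; exact: sqr_ge0.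
have expand : \sum_i (Y * x i - Z * y i) ^+ 2 = Y * (X * Y - Z ^+ 2).
  transitivity (\sum_i (Y ^+ 2 * x i ^+ 2 - 2 * Y * Z * (x i * y i) + Z ^+ 2 * y i ^+ 2)).
    by apply: eq_bigr => i _; ring.
  rewrite big_split sumrB /= -!mulr_sumr -/X -/Y -/Z; ring.
have Y_gt0 : 0 < Y by rewrite lt_def Y_neq0 Y0.
rewrite -subr_ge0 -(pmulr_rge0 _ Y_gt0) -expand.
by apply: sumr_ge0 => i _; exact: sqr_ge0.
Qed.

Lemma sum_sqr_sum_mul_le (I J : finType) (u : J -> R) (A : I -> J -> R) :
  \sum_i (\sum_j u j * A i j) ^+ 2 <= (\sum_j u j ^+ 2) * \sum_i \sum_j A i j ^+ 2.
Proof. by rewrite mulr_sumr; apply: ler_sum => i _; exact: sum_mul_sqr_le. Qed.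

Lemma sqfrob_ge0 m n (A : 'M[R]_(m, n)) : 0 <= sqfrob A.
Proof. by do 2!(apply: sumr_ge0 => ? _); exact: sqr_ge0. Qed.

Lemma sqfrob_pair m n (A : 'M[R]_(m, n)) :
  sqfrob A = \sum_(p : 'I_m * 'I_n) A p.1 p.2 ^+ 2.
Proof. by rewrite /sqfrob pair_big. Qed.

Lemma sqrtr_le_sqr (x y : R) : 0 <= y -> Num.sqrt x <= y -> x <= y ^+ 2.
Proof. by move=> y_ge0; rewrite -(ler_sqrt _ (sqr_ge0 y)) sqrtr_sqr ger0_norm. Qed.

End SumsOfSquares.

Section Derivatives.
Variable R : realType.

Section AffineComposition.
Variables (V W U : normedModType R) (g : W -> U) (A : V -> W) (x v : V) (w : W).
Hypothesis A_affine : forall t : R, A (t *: v + x) = t *: w + A x.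

Let quotientE :
  (fun t : R => t^-1 *: ((g \o A \o shift x) (t *: v) - (g \o A) x)) =
  (fun t : R => t^-1 *: ((g \o shift (A x)) (t *: w) - g (A x))).
Proof. by apply: funext => t /=; rewrite A_affine. Qed.

Lemma derive_comp_affine : 'D_v (g \o A) x = 'D_w g (A x).
Proof. by rewrite /derive quotientE. Qed.

Lemma derivable_comp_affine : derivable g (A x) w -> derivable (g \o A) x v.
Proof. by rewrite /derivable quotientE. Qed.

End AffineComposition.

Lemma MVT_line (V : normedModType R) (f : V -> R) (x v : V) :
  (forall y, differentiable f y) -> exists c : R, f (x + v) - f x = 'D_v f (x + c *: v).
Proof.
move=> f_diff; pose line t : V := x + t *: v.
have line_aff t s : line (s *: 1 + t) = s *: v + line t.
  by rewrite /line -[s *: 1]/(s * 1) mulr1 scalerDl addrCA.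
have line_der t : derivable (f \o line) t 1.
  by apply: (derivable_comp_affine (line_aff t)); exact: diff_derivable.
have line_cont : {within `[0, 1], continuous (f \o line)}%classic.
  apply: continuous_subspaceT => t; apply: differentiable_continuous.
  exact/derivable1_diffP.
have [c _ mvt] := MVT_segment ler01 (fun t _ => derivableP (line_der t)) line_cont.
exists c; move: mvt; rewrite /= /line scale1r scale0r addr0 subr0 mulr1 => ->.
exact: (derive_comp_affine _ (line_aff c)).
Qed.

Lemma differentiable_mx (V : normedModType R) m n (f : V -> 'M[R]_(m, n)) x :
  (forall r k, differentiable (fun y => f y r k) x) -> differentiable f x.
Proof.
move=> f_diff.
have -> : f = \sum_(r < m) \sum_(k < n) (fun y => f y r k *: delta_mx r k).
  apply: funext => y; rewrite [LHS]matrix_sum_delta !fct_sumE.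
  by apply: eq_bigr => r _; rewrite fct_sumE.
do 2!(apply: differentiable_sum => ?); exact: differentiableZl.
Qed.

Section LinearCombination.
Variables (V W : normedModType R) (n1 n2 : nat).
Variables (k : 'I_n1 -> 'I_n2 -> V -> R) (w : 'I_n1 -> 'I_n2 -> W) (C : W) (x : V).
Hypothesis k_diff : forall a i, differentiable (k a i) x.

Let lincomb y := C + \sum_a \sum_i k a i y *: w a i.

Let lincombE : lincomb = cst C + \sum_a \sum_i (fun y => k a i y *: w a i).
Proof.
apply: funext => y; rewrite /lincomb /= !fct_sumE; congr (_ + _).
by apply: eq_bigr => a _; rewrite fct_sumE.
Qed.

Let term_diff a i : differentiable (fun y => k a i y *: w a i) x.
Proof. exact: differentiableZl. Qed.

Lemma differentiable_lincomb : differentiable lincomb x.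
Proof.
rewrite lincombE; apply: differentiableD => //.
by do 2!(apply: differentiable_sum => ?); exact: term_diff.
Qed.

Lemma derive_lincomb e : 'D_e lincomb x = \sum_a \sum_i 'D_e (k a i) x *: w a i.
Proof.
rewrite lincombE deriveD ?derive_cst ?add0r; last 2 first.
- exact: derivable_cst.
- apply/diff_derivable; do 2!(apply: differentiable_sum => ?); exact: term_diff.
rewrite derive_sum => [|a]; last first.
  by apply/diff_derivable/differentiable_sum => i; exact: term_diff.
apply: eq_bigr => a _; rewrite derive_sum => [|i]; last exact/diff_derivable/term_diff.
by apply: eq_bigr => i _; rewrite deriveE // diffZl // -deriveE.
Qed.

Lemma derive_comp_lincomb (F : W -> R) e :
  differentiable F (lincomb x) ->
  'D_e (F \o lincomb) x = \sum_a \sum_i 'D_e (k a i) x * 'D_(w a i) F (lincomb x).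
Proof.
move=> F_diff; have L_diff := differentiable_lincomb.
rewrite deriveE; last exact: differentiable_comp.
rewrite diff_comp // /= -[('d lincomb x) e]deriveE // derive_lincomb linear_sum.
apply: eq_bigr => a _; rewrite linear_sum; apply: eq_bigr => i _.
by rewrite linearZ /= -deriveE.
Qed.

End LinearCombination.

End Derivatives.

Section Blocks.
Variables (R : realType) (M B : nat) (P : 'I_M.+1 -> nat).
Local Notation S := (\sum_(j < M.+1) P j)%N.

Definition embed_block (j : 'I_M.+1) (A : 'M[R]_(P j, B)) : 'M[R]_(S, B) :=
  stack (dfwith (fun k : 'I_M.+1 => (0 : 'M[R]_(P k, B))) j A).

Lemma embed_block_is_linear j : linear (@embed_block j).
Proof.
move=> c A A'; apply/matrixP => r k; rewrite !mxE.
case: (eqVneq j (tagnat.sig1 r)) => [e|ne].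
  by move: (tagnat.sig2 r); rewrite -e => s; rewrite !dfwithin !mxE.
by rewrite !dfwithout // !mxE mulr0 addr0.
Qed.

End Blocks.

HB.instance Definition _ (R : realType) (M B : nat) (P : 'I_M.+1 -> nat) j :=
  GRing.isLinear.Build R _ _ _ (@embed_block R M B P j) (@embed_block_is_linear R M B P j).

Section Stacking.
Variables (R : realType) (M B : nat) (P : 'I_M.+1 -> nat).
Local Notation S := (\sum_(j < M.+1) P j)%N.

Lemma stack_embed_block (E : forall j, 'M[R]_(P j, B)) :
  stack E = \sum_j embed_block (E j).
Proof.
have blockE i : E i = \sum_j dfwith (fun k => 0) j (E j) i.
  by rewrite (bigD1 i) //= dfwithin big1 ?addr0 // => j ne; rewrite dfwithout.
by rewrite /embed_block /stack -mxcol_sum; apply: eq_mxcol => i; exact: blockE.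
Qed.

Lemma embed_block_edir j (A : 'M[R]_(P j, B)) :
  embed_block A = \sum_(a < P j) \sum_(i < B) A a i *: @edir R M B P j a i.
Proof.
rewrite {1}(matrix_sum_delta A) linear_sum; apply: eq_bigr => a _.
by rewrite linear_sum; apply: eq_bigr => i _; rewrite linearZ.
Qed.

Lemma stack_edir (E : forall j, 'M[R]_(P j, B)) :
  stack E = \sum_j \sum_(b < P j) \sum_(k < B) E j b k *: @edir R M B P j b k.
Proof. by rewrite stack_embed_block; apply: eq_bigr => j _; exact: embed_block_edir. Qed.

Lemma stack_dfwith (Phi : forall j, 'M[R]_(P j, B)) m (A : 'M[R]_(P m, B)) :
  stack (dfwith Phi m A) = stack (dfwith Phi m 0) + embed_block A.
Proof.
have blockE i : dfwith Phi m A i = dfwith Phi m 0 i + dfwith (fun k => 0) m A i.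
  case: (eqVneq m i) => [<-|ne]; first by rewrite !dfwithin add0r.
  by rewrite !dfwithout // addr0.
by rewrite /embed_block /stack -mxcolD; apply: eq_mxcol => i; exact: blockE.
Qed.

Lemma derive_stack (g : 'M[R]_(S, B) -> R) Y (E : forall j, 'M[R]_(P j, B)) :
  differentiable g Y ->
  'D_(stack E) g Y = \sum_j \sum_(b < P j) \sum_(k < B) E j b k * 'D_(@edir R M B P j b k) g Y.
Proof.
move=> g_diff; rewrite deriveE // stack_edir !linear_sum; apply: eq_bigr => j _.
rewrite linear_sum; apply: eq_bigr => b _; rewrite linear_sum; apply: eq_bigr => k _.
by rewrite linearZ /= -deriveE.
Qed.

Lemma sum_sigma_pair (f : forall j, 'I_(P j) -> 'I_B -> R) :
  \sum_j \sum_(b < P j) \sum_(k < B) f j b k =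
  \sum_(q : {j : 'I_M.+1 & 'I_(P j)} * 'I_B) f (tag q.1) (tagged q.1) q.2.
Proof.
rewrite -(pair_big xpredT xpredT (fun p k => f (tag p) (tagged p) k)) /=.
exact: (@sig_big_dep _ _ _ _ (fun j => 'I_(P j)) xpredT (fun _ => xpredT)
  (fun j b => \sum_(k < B) f j b k)).
Qed.

End Stacking.

Section MinibatchLoss.
Variables (R : realType) (S B : nat) (Y : Type).
Variables (l : 'cV[R]_S -> Y -> R) (ys : 'I_B -> Y).
Hypothesis l_diff : forall y v, differentiable (l^~ y) v.
Hypothesis l_diff2 : forall y (r : 'I_S) v,
  differentiable (fun w => 'D_(delta_mx r 0) (l^~ y) w) v.

Lemma col_affine (i : 'I_B) (e Z : 'M[R]_(S, B)) (t : R) :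
  col i (t *: e + Z) = t *: col i e + col i Z.
Proof. by apply/matrixP => r k; rewrite !mxE. Qed.

Lemma differentiable_col (i : 'I_B) (Z : 'M[R]_(S, B)) : differentiable (col i) Z.
Proof.
apply: differentiable_mx => r k.
have -> : (fun Z' : 'M[R]_(S, B) => col i Z' r k) = (fun Z' => Z' r i).
  by apply: funext => Z'; rewrite mxE.
exact: differentiable_coord.
Qed.

Lemma differentiable_derive_loss y (u : 'cV[R]_S) v :
  differentiable (fun w => 'D_u (l^~ y) w) v.
Proof.
have -> : (fun w => 'D_u (l^~ y) w) =
    \sum_(r < S) (fun w => u r 0 *: 'D_(delta_mx r 0) (l^~ y) w).
  apply: funext => w; rewrite fct_sumE deriveE //.
  rewrite {1}(matrix_sum_delta u) linear_sum; apply: eq_bigr => r _.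
  by rewrite big_ord1 linearZ /= deriveE.
apply: differentiable_sum => r.
exact: (@differentiableZ _ _ _ (fun w => 'D_(delta_mx r 0) (l^~ y) w)).
Qed.

Lemma FBE : FB l ys = B%:R^-1 \*: \sum_(i < B) (fun Z => l (col i Z) (ys i)).
Proof. by apply: funext => Z; rewrite /FB /= fct_sumE. Qed.

Lemma derive_FB Z e :
  'D_e (FB l ys) Z = B%:R^-1 * \sum_(i < B) 'D_(col i e) (l^~ (ys i)) (col i Z).
Proof.
have loss_der i : derivable ((l^~ (ys i)) \o col i) Z e.
  exact/(derivable_comp_affine (col_affine i e Z))/diff_derivable.
rewrite FBE deriveZ; last by apply: derivable_sum => i; exact: loss_der.
rewrite derive_sum => [|i]; last exact: loss_der.
congr (_ * _); apply: eq_bigr => i _.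
exact: (derive_comp_affine (l^~ (ys i)) (col_affine i e Z)).
Qed.

Lemma differentiable_FB Z : differentiable (FB l ys) Z.
Proof.
rewrite FBE; apply: (@differentiableZ _ _ _ (\sum_(i < B) (fun Z => l (col i Z) (ys i)))).
apply: differentiable_sum => i.
apply: (@differentiable_comp _ _ _ _ (col i) (l^~ (ys i))); first exact: differentiable_col.
exact: l_diff.
Qed.

Lemma differentiable_derive_FB e Z : differentiable (fun Z => 'D_e (FB l ys) Z) Z.
Proof.
have -> : (fun Z => 'D_e (FB l ys) Z) =
    B%:R^-1 *: \sum_(i < B) ((fun w => 'D_(col i e) (l^~ (ys i)) w) \o col i).
  by apply: funext => Z'; rewrite derive_FB /= fct_sumE.
apply: differentiableZ; apply: differentiable_sum => i.
apply: differentiable_comp; [exact: differentiable_col | exact: differentiable_derive_loss].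
Qed.

End MinibatchLoss.

Section GradientBlockLipschitz.
Variables (R : realType) (M B : nat) (P : 'I_M.+1 -> nat).
Local Notation S := (\sum_(j < M.+1) P j)%N.
Variables (F : 'M[R]_(S, B) -> R) (m : 'I_M.+1).
Hypothesis dF_diff : forall e Z, differentiable (fun Z => 'D_e F Z) Z.

Definition grad_block (Z : 'M[R]_(S, B)) : 'M[R]_(P m, B) :=
  \matrix_(a, i) 'D_(@edir R M B P m a i) F Z.

Local Notation hess a i j b k Y :=
  ('D_(@edir R M B P j b k) (fun Z => 'D_(@edir R M B P m a i) F Z) Y).

Lemma grad_block_mvt (u : 'M[R]_(P m, B)) Psi (E : forall j, 'M[R]_(P j, B)) :
  exists Y, \sum_a \sum_i u a i * (grad_block (Psi + stack E) - grad_block Psi) a i =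
    \sum_a \sum_i u a i * \sum_j \sum_(b < P j) \sum_(k < B) E j b k * hess a i j b k Y.
Proof.
pose k a i Z := 'D_(@edir R M B P m a i) F Z.
pose f Z := 0 + \sum_a \sum_i k a i Z *: u a i.
have f_diff Z : differentiable f Z by apply: differentiable_lincomb => a i; exact: dF_diff.
have [c mvt] := MVT_line (Psi : 'M[R]_(S, B)) (stack E) f_diff.
exists (Psi + c *: stack E).
transitivity (f (Psi + stack E) - f Psi).
  rewrite /f !add0r -sumrB; apply: eq_bigr => a _; rewrite -sumrB.
  by apply: eq_bigr => i _; rewrite !mxE /k -scalerBl [LHS]mulrC.
rewrite mvt derive_lincomb => [|a i]; last exact: dF_diff.
apply: eq_bigr => a _; apply: eq_bigr => i _.
rewrite derive_stack; last exact: dF_diff.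
(* On [R], [*:] is [*] only up to conversion. *)
rewrite mulrC; set s := (X in X *: _).
exact: (erefl (s * u a i)).
Qed.

Lemma hess_sqfrob_ge0 Z : 0 <= hess_sqfrob F m Z.
Proof. by do 5!(apply: sumr_ge0 => ? _); exact: sqr_ge0. Qed.

Lemma sqfrob_grad_block_sub_le (Hb : R) Psi (E : forall j, 'M[R]_(P j, B)) :
  (forall Z, hess_sqfrob F m Z <= Hb) ->
  sqfrob (grad_block (Psi + stack E) - grad_block Psi) <= Hb * \sum_j sqfrob (E j).
Proof.
move=> hess_le; set u := grad_block _ - _; set N := \sum_j sqfrob (E j).
have N_ge0 : 0 <= N by apply: sumr_ge0 => j _; exact: sqfrob_ge0.
have Hb_ge0 : 0 <= Hb := le_trans (hess_sqfrob_ge0 0) (hess_le 0).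
have [Y mvt] := grad_block_mvt u Psi E.
pose w a i := \sum_j \sum_(b < P j) \sum_(k < B) E j b k * hess a i j b k Y.
have U_eq : sqfrob u = \sum_a \sum_i u a i * w a i.
  by rewrite -mvt /sqfrob; do 2!(apply: eq_bigr => ? _); rewrite expr2.
have w_le : \sum_(p : 'I_(P m) * 'I_B) w p.1 p.2 ^+ 2 <= N * Hb.
  apply: le_trans (ler_wpM2l N_ge0 (hess_le Y)).
  rewrite /hess_sqfrob [X in _ <= _ * X]pair_big /=.
  have wE p : w p.1 p.2 = \sum_(q : {j : 'I_M.+1 & 'I_(P j)} * 'I_B)
      E (tag q.1) (tagged q.1) q.2 * hess p.1 p.2 (tag q.1) (tagged q.1) q.2 Y :=
    sum_sigma_pair (fun j b k => E j b k * hess p.1 p.2 j b k Y).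
  have hessE (p : 'I_(P m) * 'I_B) :
      \sum_j \sum_(b < P j) \sum_(k < B) hess p.1 p.2 j b k Y ^+ 2 =
      \sum_(q : {j : 'I_M.+1 & 'I_(P j)} * 'I_B)
        hess p.1 p.2 (tag q.1) (tagged q.1) q.2 Y ^+ 2 :=
    sum_sigma_pair (fun j b k => hess p.1 p.2 j b k Y ^+ 2).
  have NE : N = \sum_(q : {j : 'I_M.+1 & 'I_(P j)} * 'I_B)
      E (tag q.1) (tagged q.1) q.2 ^+ 2 := sum_sigma_pair (fun j b k => E j b k ^+ 2).
  rewrite NE; under eq_bigr => p _ do rewrite wE.
  under [X in _ <= _ * X]eq_bigr => p _ do rewrite hessE.
  exact: sum_sqr_sum_mul_le.
have [U_eq0|U_neq0] := eqVneq (sqfrob u) 0; first by rewrite U_eq0 mulr_ge0.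
have U_gt0 : 0 < sqfrob u by rewrite lt_def U_neq0 sqfrob_ge0.
rewrite -(ler_pM2l U_gt0) -expr2 {1}U_eq pair_big /= (mulrC Hb).
apply: le_trans (sum_mul_sqr_le _ _) _.
by rewrite -sqfrob_pair ler_wpM2l ?sqfrob_ge0.
Qed.

End GradientBlockLipschitz.

Section PartyGradient.
Unset Implicit Arguments.
Variables (R : realType) (M B : nat) (X : 'I_M.+1 -> Type) (Y : Type).
Variables (P D : 'I_M.+1 -> nat) (h : forall j, 'rV[R]_(pdim P D j) -> X j -> 'cV[R]_(P j)).
Variables (l : 'cV[R]_(\sum_(j < M.+1) P j) -> Y -> R) (m : 'I_M.+1).
Variables (xs : 'I_B -> forall k, X k) (ys : 'I_B -> Y).
Hypothesis l_diff : forall y v, differentiable (l^~ y) v.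
Hypothesis l_diff2 : forall y (r : 'I_(\sum_(j < M.+1) P j)) v,
  differentiable (fun w => 'D_(delta_mx r 0) (l^~ y) w) v.
Hypothesis h_diff : forall x th, differentiable (fun th' => h m th' x) th.

Local Notation emb th := (@batchEmb R M B X (P m) (pdim P D m) m (h m) th xs).
Local Notation view Phi th := (stack (dfwith Phi m (emb th))).

Lemma differentiable_emb_entry a i th : differentiable (fun th' => emb th' a i) th.
Proof.
have -> : (fun th' => emb th' a i) = (fun v : 'cV[R]_(P m) => v a 0) \o (h m)^~ (xs i m).
  by apply: funext => th'; rewrite /batchEmb /= mxE.
by apply: differentiable_comp => //; exact: differentiable_coord.
Qed.

Lemma gradm_entry (Phi : forall j, 'M[R]_(P j, B)) th c :
  gradm h l m xs ys Phi th 0 c = \sum_a \sum_i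
    grad_block (FB l ys) m (view Phi th) a i * ('D_(delta_mx 0 c) (fun th' => emb th') th) a i.
Proof.
have viewE th' : view Phi th' =
    stack (dfwith Phi m 0) + \sum_a \sum_i emb th' a i *: @edir R M B P m a i.
  by rewrite stack_dfwith embed_block_edir.
rewrite /gradm /grad mxE -[fun th' => _]/(FB l ys \o fun th' => view Phi th').
rewrite (funext viewE).
rewrite derive_comp_lincomb => [|a i|]; last 2 first.
- exact: differentiable_emb_entry.
- exact: differentiable_FB.
rewrite -viewE; apply: eq_bigr => a _; apply: eq_bigr => i _.
rewrite mulrC derive_mx ?mxE //.
by apply/derivable_mxP => a' i'; apply: diff_derivable; exact: differentiable_emb_entry.
Qed.

Lemma sqfrob_gradm_sub_le (Phi1 Phi2 : forall j, 'M[R]_(P j, B)) th (Hb Gb : R) :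
  (forall Z, hess_sqfrob (FB l ys) m Z <= Hb) -> jac_sqfrob (fun th' => emb th') th <= Gb ->
  sqfrob (gradm h l m xs ys Phi1 th - gradm h l m xs ys Phi2 th)
    <= Hb * Gb * \sum_(j < M.+1 | j != m) sqfrob (Phi1 j - Phi2 j).
Proof.
move=> hess_le jac_le.
pose E j := dfwith Phi1 m (emb th) j - dfwith Phi2 m (emb th) j.
have viewE : view Phi1 th = view Phi2 th + stack E by rewrite /stack mxcolB addrC subrK.
have sumE : \sum_j sqfrob (E j) = \sum_(j < M.+1 | j != m) sqfrob (Phi1 j - Phi2 j).
  rewrite (bigD1 m) //= /E !dfwithin subrr [sqfrob 0]big1 ?add0r => [|a _].
    by apply: eq_bigr => j ne; rewrite !dfwithout // eq_sym.
  by rewrite big1 // => i _; rewrite mxE expr0n.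
pose u := grad_block (FB l ys) m (view Phi1 th) - grad_block (FB l ys) m (view Phi2 th).
have u_le : sqfrob u <= Hb * \sum_(j < M.+1 | j != m) sqfrob (Phi1 j - Phi2 j).
  rewrite -sumE /u viewE; apply: sqfrob_grad_block_sub_le => // e Z.
  exact: differentiable_derive_FB.
have gradE c : (gradm h l m xs ys Phi1 th - gradm h l m xs ys Phi2 th) 0 c =
    \sum_(p : 'I_(P m) * 'I_B) u p.1 p.2 * ('D_(delta_mx 0 c) (fun th' => emb th') th) p.1 p.2.
  rewrite mxE [X in _ + X]mxE !gradm_entry !pair_big -sumrB; apply: eq_bigr => p _.
  by rewrite !mxE -mulrBl.
have Gb_ge0 : 0 <= Gb.
  by apply: le_trans jac_le; apply: sumr_ge0 => c _; exact: sqfrob_ge0.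
rewrite mulrAC; apply: le_trans (ler_wpM2r Gb_ge0 u_le).
apply: le_trans (ler_wpM2l (sqfrob_ge0 u) jac_le).
rewrite {1}/sqfrob big_ord1 sqfrob_pair /jac_sqfrob.
under eq_bigr => c _ do rewrite gradE.
under [X in _ <= _ * X]eq_bigr => c _ do rewrite sqfrob_pair.
exact: sum_sqr_sum_mul_le.
Qed.

End PartyGradient.

Section Integration.
Local Open Scope ereal_scope.
Variables (d : measure_display) (T : measurableType d) (R : realType).
Variable mu : {measure set T -> \bar R}.

Lemma ge0_le_integral_nonmeasurable (f g : T -> \bar R) :
  (forall x, 0 <= f x) -> (forall x, f x <= g x) ->
  \int[mu]_x f x <= \int[mu]_x g x.
Proof.
move=> f_ge0 f_le_g.
rewrite !ge0_integralE // => [|x _]; last exact: le_trans (f_ge0 x) (f_le_g x).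
apply: le_ereal_sup => _ [s s_le <-]; exists s => // x.
by apply: le_trans (s_le x) _; rewrite /patch; case: ifP.
Qed.

Lemma integral_le_scaled_sum (I : finType) (keep : pred I) (c : R)
    (f : T -> R) (g : I -> T -> R) :
  (0 <= c)%R -> (forall x, 0 <= f x)%R -> (forall i x, 0 <= g i x)%R ->
  (forall i, measurable_fun setT (g i)) ->
  (forall x, f x <= c * \sum_(i | keep i) g i x)%R ->
  \int[mu]_x (f x)%:E <= c%:E * \sum_(i | keep i) \int[mu]_x (g i x)%:E.
Proof.
move=> c_ge0 f_ge0 g_ge0 g_meas f_le.
have cg_meas i : measurable_fun [set: T] (fun x => c%:E * (g i x)%:E).
  exact/measurable_funeM/measurable_EFinP.
rewrite ge0_sume_distrr => [|i _]; last by apply: integral_ge0 => x _; rewrite lee_fin.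
rewrite -big_filter.
have scale_integral i :
    c%:E * \int[mu]_x (g i x)%:E = \int[mu]_x (c%:E * (g i x)%:E).
  by rewrite ge0_integralZl_EFin // => [x _|]; [rewrite lee_fin | exact/measurable_EFinP].
under eq_bigr do rewrite scale_integral.
rewrite -ge0_integral_sum // => [|i x _]; last by rewrite -EFinM lee_fin mulr_ge0.
apply: ge0_le_integral_nonmeasurable => x; first by rewrite lee_fin.
under eq_bigr do rewrite -EFinM.
by rewrite sumEFin lee_fin big_filter -mulr_sumr.
Qed.

End Integration.

Theorem lemma1 (R : realType) (d : measure_display) (Omega : measurableType d)
  (Pr : probability Omega R)
  (M B N Q : nat) (hB : (0 < B)%N) (hQ : (0 < Q)%N)
  (P D : 'I_M.+1 -> nat) (X : 'I_M.+1 -> Type) (Y : Type)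
  (h : forall j, 'rV[R]_(pdim P D j) -> X j -> 'cV[R]_(P j))
  (h_server : forall (th : 'rV[R]_(P ord0)) (x : X ord0), h ord0 th x = th^T)
  (l : 'cV[R]_(\sum_(j < M.+1) P j) -> Y -> R)
  (xdat : 'I_N -> forall j, X j) (ydat : 'I_N -> Y)
  (H G : 'I_M.+1 -> R)
  (l_diff : forall y v, differentiable (l^~ y) v)
  (l_diff2 : forall y (r : 'I_(\sum_(j < M.+1) P j)) v,
      differentiable (fun w => derive (l^~ y) w (delta_mx r 0)) v)
  (h_diff : forall j x th, differentiable (fun th' => h j th' x) th)
  (H_pos : forall m, 0 < H m) (G_pos : forall m, 0 < G m)
  (A4 : forall (b : 'I_B -> 'I_N) m Phi,
      Num.sqrt (hess_sqfrob (FB l (fun i => ydat (b i))) m Phi) <= H m)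
  (A5 : forall (b : 'I_B -> 'I_N) m th,
      Num.sqrt (jac_sqfrob
        (fun th' => @batchEmb R M B X (P m) (pdim P D m) m (h m) th' (fun i => xdat (b i))) th)
      <= G m)
  (bat : nat -> Omega -> 'I_B -> 'I_N)
  (C : forall j : 'I_M.+1, nat -> Omega -> 'cV[R]_(P j) -> 'cV[R]_(P j))
  (eta : nat -> R)
  (theta : forall j, nat -> Omega -> 'rV[R]_(pdim P D j))
  (update : forall m t w,
      theta m t.+1 w = theta m t w - eta (t - t %% Q)%N *:
        gradm h l m (fun i => xdat (bat (t - t %% Q)%N w i)) (fun i => ydat (bat (t - t %% Q)%N w i))
          (embC h xdat bat C theta (t - t %% Q)%N w) (theta m t w))
  (eps_meas : forall j t0, (t0 %% Q = 0)%N ->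
      measurable_fun setT (fun w => sqfrob (embC h xdat bat C theta t0 w j
                                            - embU h xdat bat theta t0 w j)))
  : forall (t : nat) (m : 'I_M.+1),
    let t0 := (t - t %% Q)%N in
    (\int[Pr]_w (sqfrob
        (gradm h l m (fun i => xdat (bat t0 w i)) (fun i => ydat (bat t0 w i))
           (embC h xdat bat C theta t0 w) (theta m t w)
         - gradm h l m (fun i => xdat (bat t0 w i)) (fun i => ydat (bat t0 w i))
           (embU h xdat bat theta t0 w) (theta m t w)))%:E
     <= (H m ^+ 2 * G m ^+ 2)%:E *
        \sum_(j < M.+1 | j != m)
          \int[Pr]_w (sqfrob (embC h xdat bat C theta t0 w j - embU h xdat bat theta t0 w j))%:E)%E.
Proof.
move=> t m /=; set t0 := (t - t %% Q)%N.
have t0_mod : (t0 %% Q = 0)%N by rewrite /t0 {1}(divn_eq t Q) addnK modnMl.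
apply: integral_le_scaled_sum => [|w|j w|j|w].
- by rewrite mulr_ge0 // sqr_ge0.
- exact: sqfrob_ge0.
- exact: sqfrob_ge0.
- exact: eps_meas.
- apply: sqfrob_gradm_sub_le => [|||Z|]; [exact: l_diff|exact: l_diff2|exact: h_diff|..].
  + exact: sqrtr_le_sqr (ltW (H_pos m)) (A4 _ _ _).
  + exact: sqrtr_le_sqr (ltW (G_pos m)) (A5 _ _ _).
Qed.
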